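(* Consider the looped Markov chain $\mathcal{G}'$ described in the context, with parameters $r\ge1$, $p,p_c\in[0,1]$, and let $\nu=p\cdot p_c$ with $\nu\cdot r<1$. Then $m_\sharp(s_i^\alpha)\in\Theta(\nu^{-t})$ for $\alpha=\alpha_1\cdots\alpha_t$, i.e. there are constants $0<c_1\le c_2<\infty$ depending only on $r,p,p_c$ such that $c_1\nu^{-t}\le m_\sharp(s_i^\alpha)\le c_2\nu^{-t}$ for all $t\ge0$, all $\alpha\in\{1,\ldots,r\}^t$ and all $1\le i\le r$.
   Context: Fix an integer $r\ge1$ and probabilities $p,p_c\in[0,1]$. Words $\alpha\in\{1,\ldots,r\}^*$ (finite sequences, $\varepsilon$ empty word, $\alpha\cdot i$ concatenation, $r^k$ the word of $k$ letters $r$) are called blocks. The Markov chain $\mathcal{G}'$ has the countable state space $\{s_i^\alpha, c_i^\alpha : 1\le i\le r,\ \alpha\in\{1,\ldots,r\}^*\}\cup\{\sharp\}$, initial state $\sharp$, and transition probabilities (all unlisted ones are $0$): $p(\sharp,s_1^\varepsilon)=1$; $p(s_i^\alpha,c_i^\alpha)=p$ for $1\le i\le r$; $p(s_i^\alpha,s_{i+1}^\alpha)=1-p$ for $1\le i<r$; $p(c_i^\alpha,s_1^{\alpha\cdot i})=p_c$ for $1\le i\le r$; $p(c_i^\alpha,s_{i+1}^\alpha)=1-p_c$ for $1\le i<r$; for every word $\gamma=\beta\cdot i\cdot r^k$ with $1\le i<r$, $k\ge0$: $p(s_r^\gamma,s_{i+1}^\beta)=1-p$, $p(c_r^\gamma,s_{i+1}^\beta)=1-p_c$;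 for every $\gamma\in r^*$ (including $\varepsilon$): $p(s_r^\gamma,\sharp)=1-p$, $p(c_r^\gamma,\sharp)=1-p_c$. For states $x,y$, $m_x(y)$ denotes the expected value of $\inf\{n\ge0: X_n=y\}$ for the chain $(X_n)$ started at $X_0=x$. *)

From HB Require Import structures.
From mathcomp Require Import all_boot all_order all_algebra.
From mathcomp Require Import all_classical all_reals all_analysis.
Set Implicit Arguments. Unset Strict Implicit. Unset Printing Implicit Defensive.
Import Order.TTheory GRing.Theory Num.Theory.
Local Open Scope ring_scope.

(* Letters and indices are natural numbers; only indices in [1, r] and words
   over {1..r} are meaningful (all others are unreachable from sharp). *)
Inductive state : Type :=
| sharp : state
| s : nat -> seq nat -> state
| c : nat -> seq nat -> state.

Definition state_eqb (x y : state) : bool :=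
  match x, y with
  | sharp, sharp => true
  | s i a, s j b => (i == j) && (a == b)
  | c i a, c j b => (i == j) && (a == b)
  | _, _ => false
  end.

Lemma state_eqP : Equality.axiom state_eqb.
Proof.
case=> [|i a|i a] [|j b|j b] /=; try by constructor.
- by apply: (iffP andP) => [[/eqP -> /eqP ->]|[-> ->]].
- by apply: (iffP andP) => [[/eqP -> /eqP ->]|[-> ->]].
Qed.

HB.instance Definition _ := hasDecEq.Build state state_eqP.

(* For a word gamma, [strip r gamma] is [Some (beta, i)] if
   gamma = beta . i . r^k with i <> r, and [None] if gamma is in r^*. *)
Definition strip (r : nat) (a : seq nat) : option (seq nat * nat) :=
  let b := rev a in
  match drop (find (fun x => x != r) b) b with
  | [::] => None
  | j :: rest => Some (rev rest, j)
  end.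

Section Chain.
Variable R : realType.

Definition back (r : nat) (a : seq nat) (q : R) : seq (state * R) :=
  match strip r a with
  | None => [:: (sharp, q)]
  | Some (b, j) => [:: (s j.+1 b, q)]
  end.

Definition step (r : nat) (p pc : R) (x : state) : seq (state * R) :=
  match x with
  | sharp => [:: (s 1 [::], 1)]
  | s i a => (c i a, p) ::
      (if (i < r)%N then [:: (s i.+1 a, 1 - p)]
       else if i == r then back r a (1 - p) else [::])
  | c i a => (s 1 (rcons a i), pc) ::
      (if (i < r)%N then [:: (s i.+1 a, 1 - pc)]
       else if i == r then back r a (1 - pc) else [::])
  end.

(* all paths of length n started at x that do not visit y at times < n,
   recorded as (endpoint, probability of the path) *)
Fixpoint tpaths (r : nat) (p pc : R) (x y : state) (n : nat)
  : seq (state * R) :=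
  match n with
  | 0 => [:: (x, 1)]
  | n'.+1 => flatten [seq (if z.1 == y then [::]
                          else [seq (w.1, z.2 * w.2) | w <- step r p pc z.1])
                     | z <- tpaths r p pc x y n']
  end.

(* P_x(T_y = n), where T_y = inf {n >= 0 : X_n = y} *)
Definition hitP (r : nat) (p pc : R) (x y : state) (n : nat) : R :=
  \sum_(z <- tpaths r p pc x y n | z.1 == y) z.2.

(* m_x(y) = E_x[T_y] in the extended reals: +oo if P_x(T_y < oo) < 1 *)
Definition mhit (r : nat) (p pc : R) (x y : state) : \bar R :=
  if (\sum_(0 <= n <oo) (hitP r p pc x y n)%:E == 1%E)%E
  then (\sum_(0 <= n <oo) (n%:R * hitP r p pc x y n)%:E)%E
  else (+oo)%E.

End Chain.

(* Write nu = p pc, y = s_i^alpha and t = |alpha|.  An excursion from sharp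
   reaches y before returning to sharp with probability nu^t: it must descend
   into the blocks alpha_1, alpha_1 alpha_2, ... one letter at a time, each with
   probability nu, and then passes through s_i^alpha surely.  The probability h
   of reaching y before sharp is harmonic away from sharp and y.
   Lower bound: h increases by nu^t only at sharp, so P(T_y < N) <= N nu^t, and
   E[T_y] >= N/4 for N close to nu^-t / 2.
   Upper bound: when nu r < 1, a potential D linear in the number of states
   still to be scanned decreases by one per step away from sharp, so
   V = D + (1 + a r) nu^-t (1 - h) is a Foster-Lyapunov function for y and
   E[T_y] <= V(sharp) = (1 + a r) nu^-t.  The same drift condition gives
   N P(T_y >= N) <= V, hence T_y is finite almost surely. *)

From mathcomp Require Import all_boot all_order all_algebra.
From mathcomp Require Import all_classical all_reals all_analysis.
From mathcomp Require Import ring lra zify.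
Import Order.TTheory GRing.Theory Num.Theory.
Local Open Scope ring_scope.
Set Implicit Arguments. Unset Strict Implicit. Unset Printing Implicit Defensive.

Section Kernel.
Variables (R : realType) (T : eqType) (P : T -> seq (T * R)) (ok : pred T).

Definition expect (g : T -> R) (x : T) : R := \sum_(w <- P x) w.2 * g w.1.

Lemma expectD g1 g2 x : expect (fun z => g1 z + g2 z) x = expect g1 x + expect g2 x.
Proof. by rewrite /expect -big_split; apply: eq_bigr => w _; rewrite mulrDr. Qed.

Lemma expectZ k g x : expect (fun z => k * g z) x = k * expect g x.
Proof. by rewrite /expect mulr_sumr; apply: eq_bigr => w _; rewrite mulrCA. Qed.

Lemma expect_sum (I : Type) (l : seq I) (g : I -> T -> R) x :
  expect (fun z => \sum_(m <- l) g m z) x = \sum_(m <- l) expect (g m) x.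
Proof. by rewrite /expect exchange_big /=; apply: eq_bigr => w _; rewrite mulr_sumr. Qed.

Hypothesis P_ge0 : forall x w, ok x -> w \in P x -> 0 <= w.2.
Hypothesis P_sum1 : forall x, ok x -> \sum_(w <- P x) w.2 = 1.
Hypothesis P_ok : forall x w, ok x -> w \in P x -> ok w.1.

Lemma expect_cst k x : ok x -> expect (fun=> k) x = k.
Proof. by move=> okx; rewrite /expect -big_distrl /= P_sum1 // mul1r. Qed.

Lemma expectDc g k x : ok x -> expect (fun z => g z + k) x = expect g x + k.
Proof.
move=> okx; rewrite /expect; under eq_bigr do rewrite mulrDr.
by rewrite big_split /= -big_distrl /= P_sum1 // mul1r.
Qed.

Lemma expect_cB k g x : ok x -> expect (fun z => k - g z) x = k - expect g x.
Proof.
move=> okx; rewrite /expect; under eq_bigr do rewrite mulrBr.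
by rewrite big_split /= sumrN -big_distrl /= P_sum1 // mul1r.
Qed.

Lemma expect_mono g1 g2 x : ok x -> (forall z, ok z -> g1 z <= g2 z) ->
  expect g1 x <= expect g2 x.
Proof.
move=> okx le12; rewrite /expect big_seq [leRHS]big_seq; apply: ler_sum => w wP.
by apply: ler_wpM2l; [exact: P_ge0 wP | apply: le12; exact: P_ok wP].
Qed.

Section Hitting.
Variable y : T.

(* [hit n x] is P_x(T_y = n). *)
Definition taboo (g : T -> R) (z : T) : R := if z == y then 0 else expect g z.

Definition hit (n : nat) : T -> R := iter n taboo (fun z => (z == y)%:R).

Definition hit_before (N : nat) (x : T) : R := \sum_(0 <= m < N) hit m x.

Definition hit_mean (x : T) : \bar R := (\sum_(0 <= n <oo) (n%:R * hit n x)%:E)%E.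

Lemma hit0 x : hit 0 x = (x == y)%:R.
Proof. by []. Qed.

Lemma hitS n x : hit n.+1 x = if x == y then 0 else expect (hit n) x.
Proof. by rewrite /hit iterS. Qed.

Lemma hit_ge0 n x : ok x -> 0 <= hit n x.
Proof.
elim: n x => [|n IH] x okx; first by rewrite ler0n.
rewrite hitS; case: eqP => // _; rewrite -(expect_cst 0 okx).
exact: expect_mono.
Qed.

Lemma hit_beforeS N x :
  hit_before N.+1 x = if x == y then 1 else expect (hit_before N) x.
Proof.
rewrite /hit_before big_nat_recl // hit0; under eq_bigr do rewrite hitS.
case: eqP => _; first by rewrite big1 ?addr0.
by rewrite add0r expect_sum.
Qed.

Lemma hit_before1 x : hit_before 1 x = (x == y)%:R.
Proof. by rewrite /hit_before big_nat1. Qed.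

Lemma hit_before_recr N x : hit_before N.+1 x = hit_before N x + hit N x.
Proof. by rewrite /hit_before big_nat_recr. Qed.

Lemma hit_before_le1 N x : ok x -> hit_before N x <= 1.
Proof.
elim: N x => [|N IH] x okx; first by rewrite /hit_before big_geq ?ler01.
rewrite hit_beforeS; case: eqP => // _; rewrite -(expect_cst 1 okx).
exact: expect_mono.
Qed.

Lemma hit_before_homo x : ok x ->
  {homo hit_before^~ x : N M / (N <= M)%N >-> N <= M}.
Proof.
move=> okx N M NM; rewrite /hit_before (big_cat_nat (leq0n N) NM) /= lerDl.
by rewrite big_seq_cond; apply: sumr_ge0 => m _; exact: hit_ge0.
Qed.

Lemma hit_before_le_superharmonic (h : T -> R) (e : R) :
  (forall z, ok z -> 0 <= h z) -> 1 <= h y -> 0 <= e ->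
  (forall z, ok z -> z != y -> expect h z <= h z + e) ->
  forall N x, ok x -> hit_before N x <= h x + N%:R * e.
Proof.
move=> h_ge0 hy1 e_ge0 h_super; elim=> [|N IH] x okx.
  by rewrite /hit_before big_geq // mul0r addr0 h_ge0.
rewrite hit_beforeS; case: eqP => [->|/eqP xy].
  by rewrite ler_wpDr // mulr_ge0.
apply: le_trans (expect_mono (g1 := hit_before N) (g2 := fun z => h z + N%:R * e) okx IH) _.
rewrite expectDc // -natr1 mulrDl mul1r; have := h_super x okx xy; lra.
Qed.

Lemma hit_partial_mean N x : \sum_(0 <= m < N) m%:R * hit m x =
  \sum_(0 <= k < N) (hit_before N x - hit_before k.+1 x).
Proof.
elim: N => [|N IH]; first by rewrite !big_geq.
rewrite big_nat_recr //= IH [RHS]big_nat_recr //= subrr addr0 hit_before_recr.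
under [in RHS]eq_bigr do rewrite addrAC.
by rewrite [RHS]big_split /= sumr_const_nat subn0 mulr_natl.
Qed.

Lemma hit_partial_mean_le N x : ok x ->
  \sum_(0 <= m < N) m%:R * hit m x <= \sum_(0 <= k < N) (1 - hit_before k.+1 x).
Proof.
by move=> okx; rewrite hit_partial_mean; apply: ler_sum_nat => k _;
  rewrite lerD2r hit_before_le1.
Qed.

Lemma hit_mean_ge N N' x : ok x -> (N <= N')%N ->
  ((N%:R * (hit_before N' x - hit_before N x))%:E <= hit_mean x)%E.
Proof.
move=> okx NN'; apply: le_trans (nneseries_lim_ge N' _); last first.
  by move=> n _ _; rewrite lee_fin mulr_ge0 // hit_ge0.
rewrite sumEFin lee_fin hit_partial_mean (big_cat_nat (leq0n N) NN') /=.
rewrite -[leLHS]addr0 -[X in X%:R * _]subn0 mulr_natl -sumr_const_nat; apply: lerD.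
  by apply: ler_sum_nat => k /andP[_ kN]; rewrite lerD2l lerN2 hit_before_homo.
by rewrite big_seq_cond; apply: sumr_ge0 => k /andP[];
  rewrite mem_index_iota subr_ge0 => /andP[_ kN'] _; apply: hit_before_homo.
Qed.

Section Foster.
Variable V : T -> R.
Hypothesis V_ge0 : forall z, ok z -> 0 <= V z.
Hypothesis V_drift : forall z, ok z -> z != y -> 1 + expect V z <= V z.

Lemma foster_tail_sum N x : ok x ->
  \sum_(0 <= k < N) (1 - hit_before k.+1 x) <= V x.
Proof.
elim: N x => [|N IH] x okx; first by rewrite big_geq // V_ge0.
rewrite big_nat_recl //; case: (eqVneq x y) => [xy|xy].
  rewrite hit_beforeS xy eqxx subrr add0r big1 -?xy ?V_ge0 //.
  by move=> k _; rewrite hit_beforeS xy eqxx subrr.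
rewrite hit_before1 (negbTE xy) subr0.
under eq_bigr do rewrite hit_beforeS (negbTE xy) -expect_cB //.
rewrite -expect_sum; apply: le_trans (V_drift okx xy); rewrite lerD2l.
exact: expect_mono.
Qed.

Lemma foster_tail N x : ok x -> N%:R * (1 - hit_before N x) <= V x.
Proof.
move=> okx; apply: le_trans (foster_tail_sum N okx).
rewrite -[X in X%:R * _]subn0 mulr_natl -sumr_const_nat; apply: ler_sum_nat => k /andP[_ kN].
by rewrite lerD2l lerN2 hit_before_homo.
Qed.

Lemma hit_series_eq1 x : ok x -> (\sum_(0 <= n <oo) (hit n x)%:E = 1)%E.
Proof.
move=> okx; have hit_ge0E n : (0 <= (hit n x)%:E)%E by rewrite lee_fin hit_ge0.
apply/eqP; rewrite eq_le; apply/andP; split.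
  apply: lime_le; first exact: is_cvg_nneseries.
  by apply: nearW => N; rewrite sumEFin lee_fin hit_before_le1.
apply/lee_subgt0Pr => e e_gt0.
pose N := (Num.truncn (V x / e)).+1.
have NVe : V x < N%:R * e by rewrite -ltr_pdivrMr // truncnS_gt.
apply: le_trans (nneseries_lim_ge N _) => //; rewrite sumEFin -EFinB lee_fin.
have tail := foster_tail N okx.
have N_gt0 : (0 < N%:R :> R) by rewrite ltr0n.
case: (lerP (1 - e) (hit_before N x)) => // small.
have : N%:R * e < N%:R * (1 - hit_before N x) by rewrite ltr_pM2l //; lra.
lra.
Qed.

Lemma hit_mean_le x : ok x -> (hit_mean x <= (V x)%:E)%E.
Proof.
move=> okx; apply: lime_le.
  by apply: is_cvg_nneseries => n _ _; rewrite lee_fin mulr_ge0 ?hit_ge0.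
apply: nearW => N; rewrite sumEFin lee_fin.
exact (le_trans (hit_partial_mean_le N okx) (foster_tail_sum N okx)).
Qed.

Lemma hit_mean_ge_half N x : ok x ->
  ((N%:R * (1 - hit_before N x) / 2)%:E <= hit_mean x)%E.
Proof.
move=> okx; set d := 1 - hit_before N x.
have d_ge0 : 0 <= d by rewrite subr_ge0 hit_before_le1.
have [d0|d_gt0] := eqVneq d 0.
  rewrite d0 mulr0 mul0r; apply: nneseries_ge0 => n _ _.
  by rewrite lee_fin mulr_ge0 ?hit_ge0.
have {d_gt0 d_ge0}d_gt0 : 0 < d by rewrite lt_def d_gt0.
pose N' := (N + (Num.truncn (2 * V x / d)).+1)%N.
have N'_gt : 2 * V x < N'%:R * d.
  rewrite -ltr_pdivrMr // /N' natrD; have := truncnS_gt (2 * V x / d).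
  have := ler0n R N; lra.
apply: le_trans (hit_mean_ge okx (leq_addr _ N : (N <= N')%N)); rewrite lee_fin.
have N'_gt0 : (0 < N'%:R :> R) by rewrite ltr0n /N' addnS.
have tail := foster_tail N' okx.
have : N'%:R * (1 - hit_before N' x) < N'%:R * (d / 2) by lra.
rewrite ltr_pM2l // => tail_small.
rewrite -mulrA ler_wpM2l //; move: tail_small; rewrite /d; lra.
Qed.

Lemma hit_mean_ge_inv x (t : R) : ok x -> x != y -> 0 < t ->
  (forall N, hit_before N x <= N%:R * t) -> ((1 / 16 * t^-1)%:E <= hit_mean x)%E.
Proof.
move=> okx xy t_gt0 hit_lin.
have mean_ge_half := hit_mean_ge_half 1 okx.
rewrite hit_before1 (negbTE xy) subr0 mulr1 in mean_ge_half.
pose N := Num.truncn (t^-1 / 2).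
have N_le : N%:R <= t^-1 / 2 by rewrite truncn_le divr_ge0 ?invr_ge0 ?ltW.
have N_gt : t^-1 / 2 < N%:R + 1 by rewrite natr1 truncnS_gt.
have Nt_le : N%:R * t <= 1 / 2.
  apply: le_trans (ler_wpM2r (ltW t_gt0) N_le) _.
  by rewrite mulrAC mulVf ?gt_eqF // !mul1r.
have mean_geN := hit_mean_ge_half N okx.
have {}mean_geN : ((N%:R / 4)%:E <= hit_mean x)%E.
  apply: le_trans mean_geN; rewrite lee_fin -mulrA ler_wpM2l //.
  have := hit_lin N; lra.
have inv_t_gt0 : 0 < t^-1 by rewrite invr_gt0.
have [inv_t_lt4|inv_t_ge4] := ltrP (t^-1) 4.
  by apply: le_trans mean_ge_half; rewrite lee_fin; lra.
by apply: le_trans mean_geN; rewrite lee_fin; lra.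
Qed.

End Foster.
End Hitting.
End Kernel.

Lemma tpaths_sum (R : realType) r (p pc : R) x y n (g : state -> R) :
  \sum_(z <- tpaths r p pc x y n) z.2 * g z.1 = iter n (taboo (step r p pc) y) g x.
Proof.
elim: n g => [|n IH] g; first by rewrite big_seq1 mul1r.
rewrite iterSr -IH /= big_flatten /= big_map; apply: eq_bigr => z _.
rewrite /taboo; case: eqP => _; first by rewrite big_nil mulr0.
by rewrite big_map /expect mulr_sumr; apply: eq_bigr => w _; rewrite mulrA.
Qed.

Lemma hitP_hit (R : realType) r (p pc : R) x y :
  hitP r p pc x y = fun n => hit (step r p pc) y n x.
Proof.
apply: funext => n; rewrite /hitP /hit -tpaths_sum big_mkcond /=.
by apply: eq_bigr => z _; case: eqP => _; rewrite ?mulr1 ?mulr0.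
Qed.

Definition letter (r b : nat) : bool := (1 <= b <= r)%N.

Definition valid_state (r : nat) (x : state) : bool :=
  match x with
  | sharp => true
  | s i a | c i a => letter r i && all (letter r) a
  end.

Definition back_state (r : nat) (a : seq nat) : state :=
  if strip r a is Some (b, j) then s j.+1 b else sharp.

Definition next_state (r j : nat) (a : seq nat) : state :=
  if (j < r)%N then s j.+1 a else back_state r a.

Lemma back_state_rcons r a m :
  back_state r (rcons a m) = if m == r then back_state r a else s m.+1 a.
Proof.
rewrite /back_state /strip rev_rcons /=.
by case: eqP => [->|_] /=; rewrite ?revK.
Qed.

Lemma eq_back_state (T : Type) r (F : state -> T) (f : seq nat -> T) :
  F sharp = f [::] ->
  (forall a, all (letter r) a -> f (rcons a r) = f a) ->
  (forall a m, all (letter r) a -> letter r m -> m != r -> F (s m.+1 a) = f (rcons a m)) ->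
  forall a, all (letter r) a -> F (back_state r a) = f a.
Proof.
move=> F0 f_r f_m; elim/last_ind => [|a m IH] // /[!all_rcons] /andP[am a_ok].
by rewrite back_state_rcons; case: eqP => [->|/eqP mr]; [rewrite f_r // IH | exact: f_m].
Qed.

Lemma valid_back_state r a : all (letter r) a -> valid_state r (back_state r a).
Proof.
elim/last_ind: a => [|a m IH] // /[!all_rcons] /andP[am a_ok].
rewrite back_state_rcons; case: eqP => [_|/eqP mr]; first exact: IH.
by rewrite /= a_ok andbT /letter /=; move: am mr; rewrite /letter; lia.
Qed.

Lemma valid_next_state r j a :
  letter r j -> all (letter r) a -> valid_state r (next_state r j a).
Proof.
move=> /andP[_ jr] a_ok; rewrite /next_state; case: ltnP => jr'.
  by rewrite /= a_ok andbT /letter /= jr'.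
exact: valid_back_state.
Qed.

Lemma step_s (R : realType) r (p pc : R) j a : letter r j ->
  step r p pc (s j a) = [:: (c j a, p); (next_state r j a, 1 - p)].
Proof.
move=> /andP[_ jr]; rewrite /= /next_state /back_state /back.
case: ltnP => // jr'; have -> : j == r by rewrite eqn_leq jr jr'.
by case: strip => [[]|].
Qed.

Lemma step_c (R : realType) r (p pc : R) j a : letter r j ->
  step r p pc (c j a) = [:: (s 1 (rcons a j), pc); (next_state r j a, 1 - pc)].
Proof.
move=> /andP[_ jr]; rewrite /= /next_state /back_state /back.
case: ltnP => // jr'; have -> : j == r by rewrite eqn_leq jr jr'.
by case: strip => [[]|].
Qed.

(* [reach_prob i al p pc x] is the probability that the chain started at x
   visits s_i^al before sharp.  [blk_reach] compares the block of x with al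
   letter by letter: if the first difference is a letter b < a, the chain comes
   back to s_(b+1) of the common block and must then enter each remaining letter
   of al, each with probability p pc; [base] accounts for the position inside
   the block once the block of x is exhausted. *)
Fixpoint blk_reach (R : realType) (i : nat) (nu : R) (base : seq nat -> R)
    (be al : seq nat) : R :=
  match be, al with
  | [::], _ => base al
  | b :: _, [::] => if (b < i)%N then 1 else 0
  | b :: be', a :: al' =>
      if (b < a)%N then nu ^+ size al
      else if b == a then blk_reach i nu base be' al' else 0
  end.

Definition s_reach (R : realType) (i : nat) (nu : R) (j : nat) (al : seq nat) : R :=
  match al with
  | [::] => if (j <= i)%N then 1 else 0
  | a :: _ => if (j <= a)%N then nu ^+ size al else 0
  end.

Definition c_reach (R : realType) (i : nat) (nu pc : R) (j : nat) (al : seq nat) : R :=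
  match al with
  | [::] => if (j < i)%N then 1 else 0
  | a :: al' =>
      if (j < a)%N then nu ^+ size al
      else if j == a then pc * nu ^+ size al' else 0
  end.

Definition reach_prob (R : realType) (i : nat) (al : seq nat) (p pc : R) (x : state) : R :=
  match x with
  | sharp => 0
  | s j be => blk_reach i (p * pc) (s_reach i (p * pc) j) be al
  | c j be => blk_reach i (p * pc) (c_reach i (p * pc) pc j) be al
  end.

Section BlockReach.
Variables (R : realType) (i : nat) (nu : R).

Lemma blk_reach_cat base be1 be2 al :
  blk_reach i nu base (be1 ++ be2) al = blk_reach i nu (blk_reach i nu base be2) be1 al.
Proof. by elim: be1 al => [|b be1 IH] [|a al] //=; rewrite IH. Qed.

Lemma blk_reach_comb b1 b2 b3 (l m : R) be al : l + m = 1 ->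
  (take (size be) al = be -> b1 (drop (size be) al) =
     l * b2 (drop (size be) al) + m * b3 (drop (size be) al)) ->
  blk_reach i nu b1 be al = l * blk_reach i nu b2 be al + m * blk_reach i nu b3 be al.
Proof.
move=> lm; elim: be al => [|b be IH] [|a al] /=; try by apply.
  by move=> _; case: ifP => _; rewrite -mulrDl lm mul1r.
move=> comb; case: ifP => _; first by rewrite -mulrDl lm mul1r.
case: eqP => [ba|_]; last by rewrite -mulrDl lm mul1r.
by apply: IH => ht; apply: comb; rewrite ht ba.
Qed.

Lemma eq_blk_reach (ok : pred (seq nat)) b1 b2 be al :
  (forall al', ok al' -> ok (behead al')) ->
  {in ok, b1 =1 b2} -> ok al -> blk_reach i nu b1 be al = blk_reach i nu b2 be al.
Proof.
move=> ok_behead eq12; elim: be al => [|b be IH] [|a al] //= al_ok; try exact: eq12.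
by rewrite IH //; exact: (ok_behead (a :: al)).
Qed.

Hypothesis nu01 : 0 <= nu <= 1.

Lemma blk_reach_bnd base be al :
  (forall al', 0 <= base al' <= 1) -> 0 <= blk_reach i nu base be al <= 1.
Proof.
have [nu0 nu1] := andP nu01.
move=> base01; elim: be al => [|b be IH] [|a al] //=; first by case: ifP; rewrite ?ler01 ?lexx.
case: ifP => _; first by rewrite exprn_ge0 ?exprn_ile1.
by case: ifP => _; rewrite ?lexx ?ler01.
Qed.

Lemma s_reach_bnd j al : 0 <= s_reach i nu j al <= 1.
Proof.
have [nu0 nu1] := andP nu01.
by case: al => [|a al] /=; case: ifP; rewrite ?ler01 ?lexx ?exprn_ge0 ?exprn_ile1.
Qed.

Lemma c_reach_bnd pc j al : 0 <= pc <= 1 -> 0 <= c_reach i nu pc j al <= 1.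
Proof.
have [nu0 nu1] := andP nu01; move=> /andP[pc0 pc1].
case: al => [|a al] /=; case: ifP; rewrite ?ler01 ?lexx ?exprn_ge0 ?exprn_ile1 //.
case: ifP; rewrite ?ler01 ?lexx // => _ _.
by rewrite mulr_ge0 ?exprn_ge0 //= mulr_ile1 ?exprn_ge0 ?exprn_ile1.
Qed.

End BlockReach.

Lemma blk_reach_self (R : realType) i (nu : R) al : blk_reach i nu (s_reach i nu i) al al = 1.
Proof. by elim: al => [|a al IH] /=; rewrite ?leqnn ?ltnn ?eqxx. Qed.

Lemma s_reach_split (R : realType) i (p pc : R) j al : (al = [::] -> j != i) ->
  s_reach i (p * pc) j al =
  p * c_reach i (p * pc) pc j al + (1 - p) * s_reach i (p * pc) j.+1 al.
Proof.
case: al => [|a al] /= => [/(_ erefl) ji|_];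
  by repeat case: ifP => ?; rewrite ?exprS; try ring; exfalso; lia.
Qed.

Section Chain.
Variables (R : realType) (r : nat) (p pc : R).
Hypotheses (r_gt0 : (0 < r)%N) (p_ge0 : 0 <= p) (p_le1 : p <= 1).
Hypotheses (pc_ge0 : 0 <= pc) (pc_le1 : pc <= 1).
Local Notation valid := (valid_state r).
Local Notation E := (expect (step r p pc)).

Lemma step_ge0 x w : valid x -> w \in step r p pc x -> 0 <= w.2.
Proof.
case: x => [_|j a /andP[j_ok _]|j a /andP[j_ok _]]; first by rewrite inE => /eqP ->.
  by rewrite step_s // !inE => /orP[] /eqP -> //=; rewrite subr_ge0.
by rewrite step_c // !inE => /orP[] /eqP -> //=; rewrite subr_ge0.
Qed.

Lemma step_sum1 x : valid x -> \sum_(w <- step r p pc x) w.2 = 1.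
Proof.
case: x => [_|j a /andP[j_ok _]|j a /andP[j_ok _]]; first by rewrite big_seq1.
  by rewrite step_s // !big_cons big_nil /=; ring.
by rewrite step_c // !big_cons big_nil /=; ring.
Qed.

Lemma step_valid x w : valid x -> w \in step r p pc x -> valid w.1.
Proof.
have one_ok : letter r 1 by rewrite /letter leqnn r_gt0.
case: x => [_|j a /andP[j_ok a_ok]|j a /andP[j_ok a_ok]].
- by rewrite inE => /eqP -> /=; rewrite one_ok.
- rewrite step_s // !inE => /orP[] /eqP -> /=; first by rewrite j_ok a_ok.
  exact: valid_next_state.
- rewrite step_c // !inE => /orP[] /eqP -> /=; first by rewrite one_ok all_rcons j_ok a_ok.
  exact: valid_next_state.
Qed.

Lemma expect_sharp g : E g sharp = g (s 1 [::]).
Proof. by rewrite /expect big_seq1 mul1r. Qed.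

Lemma expect_s g j a : letter r j ->
  E g (s j a) = p * g (c j a) + (1 - p) * g (next_state r j a).
Proof. by move=> j_ok; rewrite /expect step_s // !big_cons big_nil addr0. Qed.

Lemma expect_c g j a : letter r j ->
  E g (c j a) = pc * g (s 1 (rcons a j)) + (1 - pc) * g (next_state r j a).
Proof. by move=> j_ok; rewrite /expect step_c // !big_cons big_nil addr0. Qed.

Lemma reach_prob_bnd i al x : 0 <= reach_prob i al p pc x <= 1.
Proof.
have nu01 : 0 <= p * pc <= 1 by rewrite mulr_ge0 //= mulr_ile1.
case: x => [|j be|j be] /=; first by rewrite lexx ler01.
  by apply: blk_reach_bnd => // al'; exact: s_reach_bnd.
by apply: blk_reach_bnd => // al'; apply: c_reach_bnd => //; apply/andP.
Qed.

Lemma s_reach1 i (nu : R) al :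
  (0 < i)%N -> all (letter r) al -> s_reach i nu 1 al = nu ^+ size al.
Proof. by case: al => [|a al] /= i_gt0 => [|/andP[/andP[-> _] _]]; rewrite ?i_gt0. Qed.

Lemma blk_reach_back i (nu : R) m al : (i <= r)%N -> letter r m -> all (letter r) al ->
  blk_reach i nu (s_reach i nu r.+1) [:: m] al = s_reach i nu m.+1 al.
Proof.
move=> ir /andP[m1 mr]; case: al => [|a al] //= /andP[/andP[a1 ar] al_ok].
case: ifP => // ma; case: eqP => // _.
case: al al_ok => [|a' al] /=; first by case: ifP => //; lia.
by move=> /andP[/andP[_ a'r] _]; case: ifP => //; lia.
Qed.

Lemma reach_prob_next i al j be : letter r i -> all (letter r) al ->
  letter r j -> all (letter r) be ->
  reach_prob i al p pc (next_state r j be) =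
  blk_reach i (p * pc) (s_reach i (p * pc) j.+1) be al.
Proof.
move=> /andP[i1 ir] al_ok j_ok be_ok; rewrite /next_state; case: ltnP => // jr.
have -> : j = r by move: j_ok; rewrite /letter; lia.
have behead_ok (al' : seq nat) : all (letter r) al' -> all (letter r) (behead al').
  by case: al' => //= a al' /andP[].
apply: (eq_back_state (f := blk_reach i (p * pc) (s_reach i (p * pc) r.+1) ^~ al)) => //.
- by case: al al_ok => [|a al] /=; [|case/andP=> /andP[_ ar] _]; case: ifP => //; lia.
- move=> a a_ok; rewrite -cats1 blk_reach_cat.
  apply: (eq_blk_reach _ _ _ behead_ok) => // al' al'_ok.
  by rewrite blk_reach_back // /letter leqnn r_gt0.
- move=> a m a_ok m_ok _; rewrite -cats1 blk_reach_cat /=.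
  apply: (eq_blk_reach _ _ _ behead_ok) => // al' al'_ok.
  by rewrite -blk_reach_back.
Qed.

Lemma c_reach_split i j al : (0 < i)%N -> all (letter r) al ->
  c_reach i (p * pc) pc j al =
  pc * blk_reach i (p * pc) (s_reach i (p * pc) 1) [:: j] al +
  (1 - pc) * s_reach i (p * pc) j.+1 al.
Proof.
move=> i_gt0; case: al => [|a al] /= => [_|/andP[_ al_ok]]; rewrite ?(s_reach1 _ i_gt0 al_ok);
  by repeat case: ifP => ?; try ring; exfalso; lia.
Qed.

Lemma reach_prob_harmonic i al x : letter r i -> all (letter r) al ->
  valid x -> x != sharp -> x != s i al ->
  E (reach_prob i al p pc) x = reach_prob i al p pc x.
Proof.
move=> i_ok al_ok; case: x => [|j be|j be] //= /andP[j_ok be_ok] _ x_ne.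
  rewrite expect_s // reach_prob_next //=; symmetry; apply: blk_reach_comb; first ring.
  move=> al_be; apply: s_reach_split => al_nil; move: x_ne; apply: contra_neq => ji.
  by rewrite -(cat_take_drop (size be) al) al_be al_nil cats0 ji.
rewrite expect_c // reach_prob_next //= -cats1 blk_reach_cat; symmetry.
apply: blk_reach_comb => [|_]; first ring.
apply: c_reach_split; first by case/andP: i_ok.
by move: al_ok; rewrite -{1}(cat_take_drop (size be) al) all_cat => /andP[].
Qed.

Definition deficit (be : seq nat) : R := \sum_(b <- be) (r%:R - b%:R).

(* [a] times the number of s-states still to be scanned in the current block
   and its ancestors; a c-state also owes [1 + pc r a] for its pending descent. *)
Definition return_potential (a : R) (x : state) : R :=
  match x with
  | sharp => 0
  | s j be => a * (r%:R + 1 - j%:R + deficit be)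
  | c j be => 1 + pc * r%:R * a + a * (r%:R - j%:R + deficit be)
  end.

Lemma deficit_rcons be m : deficit (rcons be m) = deficit be + (r%:R - m%:R).
Proof. by rewrite /deficit -cats1 big_cat big_seq1. Qed.

Lemma deficit_ge0 be : all (letter r) be -> 0 <= deficit be.
Proof.
move=> be_ok; rewrite /deficit big_seq; apply: sumr_ge0 => b /(allP be_ok) /andP[_ br].
by rewrite subr_ge0 ler_nat.
Qed.

Lemma return_potential_next a j be : letter r j -> all (letter r) be ->
  return_potential a (next_state r j be) = a * (r%:R - j%:R + deficit be).
Proof.
move=> j_ok be_ok; rewrite /next_state; case: ltnP => jr.
  by rewrite /= -natr1; congr (_ * _); ring.
have -> : j = r by move: j_ok; rewrite /letter; lia.
rewrite subrr add0r; apply: (eq_back_state (f := fun be => a * deficit be)) => //.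
- by rewrite /deficit big_nil mulr0.
- by move=> w _; rewrite deficit_rcons subrr addr0.
- by move=> w m _ _ _; rewrite /= deficit_rcons -natr1; congr (_ * _); ring.
Qed.

Lemma return_potential_drift a x : a * (1 - p * pc * r%:R) = 1 + p ->
  valid x -> x != sharp -> E (return_potential a) x = return_potential a x - 1.
Proof.
move=> a_eq; case: x => [|j be|j be] // /andP[j_ok be_ok] _.
  by rewrite expect_s // return_potential_next //=; lra.
by rewrite expect_c // return_potential_next //= deficit_rcons; lra.
Qed.

Lemma return_potential_ge0 a x : 0 <= a -> valid x -> 0 <= return_potential a x.
Proof.
move=> a_ge0; case: x => [|j be|j be] // /andP[/andP[_ jr] /deficit_ge0 def_ge0];
  have jr' : (j%:R <= r%:R :> R) by rewrite ler_nat.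
  by apply: mulr_ge0 => //; lra.
by rewrite !addr_ge0 ?mulr_ge0 //; lra.
Qed.

Section Target.
Hypotheses (nu_gt0 : 0 < p * pc) (nu_r_lt1 : p * pc * r%:R < 1).

(* The expected time spent per scanned s-state: [a = 1 + p + p pc r a]. *)
Definition slope : R := (1 + p) / (1 - p * pc * r%:R).

Lemma slope_eq : slope * (1 - p * pc * r%:R) = 1 + p.
Proof. by rewrite /slope divfK // subr_eq0 gt_eqF. Qed.

Lemma slope_ge0 : 0 <= slope.
Proof. by apply: divr_ge0; [exact: addr_ge0 | rewrite subr_ge0 ltW]. Qed.

Variables (i : nat) (al : seq nat).
Hypotheses (i_ok : letter r i) (al_ok : all (letter r) al).

Definition foster_fn (x : state) : R :=
  return_potential slope x +
  (1 + slope * r%:R) * (p * pc) ^- size al * (1 - reach_prob i al p pc x).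

Lemma reach_prob_start : reach_prob i al p pc (s 1 [::]) = (p * pc) ^+ size al.
Proof. by rewrite /= s_reach1 //; case/andP: i_ok. Qed.

Lemma foster_fn_sharp : foster_fn sharp = (1 + slope * r%:R) * (p * pc) ^- size al.
Proof. by rewrite /foster_fn /= subr0 mulr1 add0r. Qed.

Lemma foster_fn_ge0 x : valid x -> 0 <= foster_fn x.
Proof.
move=> x_ok; rewrite addr_ge0 ?return_potential_ge0 ?slope_ge0 //.
have [_ h_le1] := andP (reach_prob_bnd i al x).
have nu_pow_ge0 : 0 <= (p * pc) ^- size al by rewrite invr_ge0 exprn_ge0 // ltW.
by rewrite !mulr_ge0 ?subr_ge0 // addr_ge0 // mulr_ge0 // slope_ge0.
Qed.

Lemma foster_fn_drift x : valid x -> x != s i al -> 1 + E foster_fn x <= foster_fn x.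
Proof.
move=> x_ok x_ne; set K := (1 + slope * r%:R) * (p * pc) ^- size al.
have [->|x_ne_sharp] := eqVneq x sharp.
  have KT : K * (p * pc) ^+ size al = 1 + slope * r%:R.
    by rewrite -mulrA mulVf ?mulr1 // expf_neq0 // gt_eqF.
  rewrite expect_sharp foster_fn_sharp /foster_fn reach_prob_start /= /deficit big_nil.
  by rewrite -/K; lra.
rewrite /foster_fn expectD expectZ (expect_cB step_sum1) // reach_prob_harmonic //.
by rewrite return_potential_drift ?slope_eq //; lra.
Qed.

Lemma hit_before_sharp N :
  hit_before (step r p pc) (s i al) N sharp <= N%:R * (p * pc) ^+ size al.
Proof.
have nu_pow_ge0 : 0 <= (p * pc) ^+ size al by rewrite exprn_ge0 ?ltW.
have h_ge0 z : valid z -> 0 <= reach_prob i al p pc z.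
  by move=> _; case/andP: (reach_prob_bnd i al z).
have h_target : 1 <= reach_prob i al p pc (s i al) by rewrite /= blk_reach_self.
have h_super z : valid z -> z != s i al ->
    E (reach_prob i al p pc) z <= reach_prob i al p pc z + (p * pc) ^+ size al.
  move=> z_ok z_ne; have [->|z_ne_sharp] := eqVneq z sharp.
    by rewrite expect_sharp reach_prob_start /= add0r.
  by rewrite reach_prob_harmonic // lerDl.
have := hit_before_le_superharmonic step_ge0 step_sum1 step_valid
  h_ge0 h_target nu_pow_ge0 h_super N (isT : valid sharp).
by rewrite /= add0r.
Qed.

Lemma mhit_sharp : mhit r p pc sharp (s i al) = hit_mean (step r p pc) (s i al) sharp.
Proof.
rewrite /mhit hitP_hit /=.
by rewrite (hit_series_eq1 step_ge0 step_sum1 step_valid foster_fn_ge0 foster_fn_drift) ?eqxx.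
Qed.

Lemma hit_mean_sharp_le :
  (hit_mean (step r p pc) (s i al) sharp <= ((1 + slope * r%:R) * (p * pc) ^- size al)%:E)%E.
Proof.
rewrite -foster_fn_sharp.
exact: (hit_mean_le step_ge0 step_sum1 step_valid foster_fn_ge0 foster_fn_drift).
Qed.

Lemma hit_mean_sharp_ge :
  ((1 / 16 * (p * pc) ^- size al)%:E <= hit_mean (step r p pc) (s i al) sharp)%E.
Proof.
exact: (hit_mean_ge_inv step_ge0 step_sum1 step_valid foster_fn_ge0 foster_fn_drift)
  (exprn_gt0 _ nu_gt0) hit_before_sharp.
Qed.

End Target.
End Chain.

Unset Implicit Arguments.

Theorem corollary3p6 (R : realType) (r : nat) (p pc : R) :
  (1 <= r)%N -> 0 <= p <= 1 -> 0 <= pc <= 1 ->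
  0 < p * pc -> p * pc * r%:R < 1 ->
  exists c1 c2 : R, 0 < c1 /\ c1 <= c2 /\
    forall (t : nat) (alpha : seq nat) (i : nat),
      size alpha = t -> all (fun a => (1 <= a <= r)%N) alpha ->
      (1 <= i <= r)%N ->
      ((c1 * (p * pc) ^- t)%:E <= mhit r p pc sharp (s i alpha))%E /\
      (mhit r p pc sharp (s i alpha) <= (c2 * (p * pc) ^- t)%:E)%E.
Proof.
move=> r_gt0 /andP[p_ge0 p_le1] /andP[pc_ge0 pc_le1] nu_gt0 nu_r_lt1.
have slope_r_ge0 : 0 <= slope r p pc * r%:R by rewrite mulr_ge0 ?slope_ge0.
exists (1 / 16), (1 + slope r p pc * r%:R); do 2 (split; first lra).
move=> _ al i <- al_ok i_ok; rewrite mhit_sharp //; split.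
  exact: hit_mean_sharp_ge.
exact: hit_mean_sharp_le.
Qed.
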